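(* Let $n\ge2$ be an integer, $\lambda\in(2n-1,2n)$, and $w_m=\phi(|m|/\lambda)$ for $|m|\le 2n-1$. Put $\|\mathbf{w}^0\|_1=1+2\sum_{l=1}^{n-1}w_{2l}$ and $\|\mathbf{w}^1\|_1=2\sum_{l=0}^{n-1}w_{2l+1}$, and consider the sub-masks of $S_{1,\mathbf{w}^\lambda}$, \[ a^0_l=\frac{w_{2l}}{\|\mathbf{w}^0\|_1}\ (l=1-n,\ldots,n-1),\qquad a^1_l=\frac{w_{2l-1}}{\|\mathbf{w}^1\|_1}\ (l=1-n,\ldots,n), \] and the difference sub-masks \[ q^0_j=\sum_{l=1-n}^{j}(a^0_l-a^1_l),\qquad q^1_j=\sum_{l=j}^{n-1}(a^0_l-a^1_{l+1}),\qquad j=1-n,\ldots,n-1. \] If \[ \frac{\sum_{l=j_0}^{n-1}w_{2l+1}}{\sum_{l=j_0}^{n-1} w_{2l}} < \frac{\|\mathbf{w}^1\|_1}{\|\mathbf{w}^0\|_1}<\frac{\sum_{l=j_1}^{n-1}w_{2l+1}}{\sum_{l=j_1+1}^{n-1} w_{2l}} \quad\text{for all } j_0=1,\ldots,n-1,\ j_1=1,\ldots,n-2, \] then $q^0_j>0$ and $q^1_j>0$ for all $j=1-n,\ldots,n-1$.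
   Context: $\phi:[0,1]\to(0,1]$ is a non-increasing function with $\phi(0)=1$. The scheme $S_{1,\mathbf{w}^\lambda}$ (weighted local polynomial regression of degree 1) acts by $(S\mathbf{f})_{2j}=\sum_{l=1-n}^{n-1}a^0_l f_{j+l}$, $(S\mathbf{f})_{2j+1}=\sum_{l=1-n}^{n}a^1_l f_{j+l}$; the numbers $q^0_j,q^1_j$ are the even and odd sub-masks of its difference scheme (the scheme with symbol $q(z)$ satisfying $a(z)=(1+z)q(z)$). *)

From mathcomp Require Import all_boot all_order all_algebra.
Set Implicit Arguments. Unset Strict Implicit. Unset Printing Implicit Defensive.
Import Order.TTheory GRing.Theory Num.Theory.
Local Open Scope ring_scope.

(* Sum over the integer range a..b (inclusive); empty (= 0) when b < a. *)
Definition isum (R : zmodType) (a b : int) (F : int -> R) : R :=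
  \sum_(i <- [seq a + (k%:Z) | k <- iota 0 (absz (b + 1 - a)%R)] | (a <= b)%R) F i.

Section Masks.
Variables (R : realFieldType) (phi : R -> R) (lambda : R) (n : nat).

Definition wt (m : int) : R := phi ((absz m)%:R / lambda).

Definition w0norm : R := 1 + 2 * isum 1 (n%:Z - 1) (fun l => wt (2 * l)).
Definition w1norm : R := 2 * isum 0 (n%:Z - 1) (fun l => wt (2 * l + 1)).

Definition a0 (l : int) : R := wt (2 * l) / w0norm.
Definition a1 (l : int) : R := wt (2 * l - 1) / w1norm.

Definition q0 (j : int) : R := isum (1 - n%:Z) j (fun l => a0 l - a1 l).
Definition q1 (j : int) : R := isum j (n%:Z - 1) (fun l => a0 l - a1 (l + 1)).
End Masks.

From Pilot Require Import Defs.
From mathcomp Require Import all_boot all_order all_algebra.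
From mathcomp Require Import zify ring lra.
Import Order.TTheory GRing.Theory Num.Theory.
Local Open Scope ring_scope.

(** The weights are even in [m], so reversing the summation index turns [q0 j]
    for [j < 0] into the tail [sum_(l >= -j) (w_2l / |w0| - w_(2l+1) / |w1|)].
    For [j >= 0], since each sub-mask sums to one (this uses [phi 0 = 1]),
    [q0 j] is the complementary tail
    [sum_(l >= j) w_(2l+1) / |w1| - sum_(l > j) w_2l / |w0|].
    The two families of ratio hypotheses say exactly that these tails are
    positive; the cases [j = 0] and [j = n - 1] hold unconditionally.
    Finally [q1 j = q0 (-j)], again by evenness of the weights. *)

Section IntegerRangeSums.
Variable R : zmodType.
Implicit Types (F G : int -> R) (a b c : int).

Lemma isumE a (m : nat) F :
  isum a (a + m%:Z - 1) F = \sum_(0 <= k < m) F (a + k%:Z).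
Proof.
rewrite /isum (_ : a + m%:Z - 1 + 1 - a = m%:Z); last by ring.
case: m => [|m]; first by rewrite /= big_nil big_geq.
by rewrite (_ : a <= a + m.+1%:Z - 1); [rewrite big_map | lia].
Qed.

Lemma isum_empty a b F : b < a -> isum a b F = 0.
Proof. by move=> ltba; rewrite /isum (_ : a <= b = false) ?big_pred0_eq //; lia. Qed.

Lemma isum1 a F : isum a a F = F a.
Proof. by have := isumE a 1 F; rewrite addrK big_nat1 addr0. Qed.

Lemma eq_isum a b F G : F =1 G -> isum a b F = isum a b G.
Proof. by move=> eqFG; apply: eq_bigr. Qed.

Lemma isumB a b F G : isum a b (fun i => F i - G i) = isum a b F - isum a b G.
Proof. exact: sumrB. Qed.

Lemma isum_shift a b F : isum (a + 1) (b + 1) F = isum a b (fun i => F (i + 1)).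
Proof.
rewrite /isum (_ : b + 1 + 1 - (a + 1) = b + 1 - a); last by ring.
by rewrite lerD2r !big_map; apply: eq_bigr => i _; rewrite addrAC.
Qed.

Lemma isum_cat a b c F : a <= b + 1 -> b <= c ->
  isum a c F = isum a b F + isum (b + 1) c F.
Proof.
move=> leab lebc.
have [m Eb] : exists m : nat, b = a + m%:Z - 1 by exists (absz (b + 1 - a)%R); lia.
have [p Ec] : exists p : nat, c = b + p%:Z by exists (absz (c - b)%R); lia.
subst c b.
rewrite (_ : a + m%:Z - 1 + 1 = a + m%:Z); last by ring.
rewrite (_ : a + m%:Z - 1 + p%:Z = a + (m + p)%N%:Z - 1); last by lia.
rewrite [in isum (a + m%:Z) _ _]
  (_ : a + (m + p)%N%:Z - 1 = a + m%:Z + p%:Z - 1); last by lia.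
rewrite !isumE (big_cat_nat (leq0n m) (leq_addr p m)) (big_addn 0 (m + p) m) addKn.
by congr (_ + _); apply: eq_bigr => i _; congr F; lia.
Qed.

Lemma isum_rev a b F : isum a b F = isum (- b) (- a) (fun i => F (- i)).
Proof.
have [ltba | leab] := ltrP (b + 1) a; first by rewrite !isum_empty //; lia.
have [m Eb] : exists m : nat, b = a + m%:Z - 1 by exists (absz (b + 1 - a)%R); lia.
subst b; rewrite (_ : - a = - (a + m%:Z - 1) + m%:Z - 1); last by ring.
rewrite !isumE big_nat_rev; apply: eq_big_nat => i /andP[_ ltim]; congr F; lia.
Qed.

End IntegerRangeSums.

Lemma isum_divr (R : fieldType) (a b : int) (F : int -> R) (c : R) :
  isum a b (fun i => F i / c) = isum a b F / c.
Proof. by rewrite /isum mulr_suml. Qed.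

Lemma isum_gt0 (R : numDomainType) (a b : int) (F : int -> R) : a <= b ->
  (forall i, a <= i <= b -> 0 < F i) -> 0 < isum a b F.
Proof.
move=> leab F_gt0.
have [m Eb] : exists m : nat, b = a + m.+1%:Z - 1 by exists (absz (b - a)%R); lia.
subst b; rewrite isumE big_nat_recl // addr0 ltr_wpDr ?F_gt0 //; last by lia.
rewrite big_seq sumr_ge0 // => i; rewrite mem_index_iota => ltim.
by apply/ltW/F_gt0; lia.
Qed.

Lemma subr_div_gt0 (R : numFieldType) (u v x y : R) :
  0 < u -> 0 < x -> 0 < y -> v / u < y / x -> 0 < u / x - v / y.
Proof.
move=> u_gt0 x_gt0 y_gt0 lt_ratio.
rewrite ltr_pdivrMr // mulrAC ltr_pdivlMr // in lt_ratio.
rewrite subr_gt0 ltr_pdivrMr // mulrAC ltr_pdivlMr //.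
by rewrite [u * y]mulrC.
Qed.

Lemma subr_div_gt0_inv (R : numFieldType) (u v x y : R) :
  0 < v -> 0 < x -> 0 < y -> x / y < u / v -> 0 < u / x - v / y.
Proof.
move=> v_gt0 x_gt0 y_gt0 lt_ratio.
rewrite ltr_pdivrMr // mulrAC ltr_pdivlMr // mulrC in lt_ratio.
by rewrite subr_gt0 ltr_pdivrMr // mulrAC ltr_pdivlMr //.
Qed.

Lemma wt_gt0 (R : realFieldType) (phi : R -> R) (lambda : R) (n : nat) (m : int) :
  (forall x, 0 <= x <= 1 -> 0 < phi x) -> (0 < n)%N -> 2 * n%:R - 1 < lambda ->
  (absz m <= 2 * n - 1)%N -> 0 < wt phi lambda m.
Proof.
move=> phi_gt0 n_gt0 lt_lambda le_m; apply: phi_gt0.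
have n_ge1 : 1 <= n%:R :> R by rewrite ler1n.
have lambda_gt0 : 0 < lambda by lra.
have : (absz m)%:R <= (2 * n - 1)%N%:R :> R by rewrite ler_nat.
rewrite natrB ?muln_gt0 // natrM => le_m_lambda.
by rewrite divr_ge0 ?(ltW lambda_gt0) //= ler_pdivrMr // mul1r; lra.
Qed.

Section Masks.
Variables (R : realFieldType) (phi : R -> R) (lambda : R) (n : nat).

Local Notation wt := (wt phi lambda).
Local Notation w0norm := (w0norm phi lambda n).
Local Notation w1norm := (w1norm phi lambda n).
Local Notation q0 := (q0 phi lambda n).
Local Notation q1 := (q1 phi lambda n).

Definition wsum0 (c : int) : R := isum c (n%:Z - 1) (fun l => wt (2 * l)).
Definition wsum1 (c : int) : R := isum c (n%:Z - 1) (fun l => wt (2 * l + 1)).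

Lemma wtN (m : int) : wt (- m) = wt m.
Proof. by rewrite /Defs.wt abszN. Qed.

Lemma q0E (j : int) : q0 j =
  isum (1 - n%:Z) j (fun l => wt (2 * l)) / w0norm
  - isum (1 - n%:Z) j (fun l => wt (2 * l - 1)) / w1norm.
Proof. by rewrite /Defs.q0 isumB !isum_divr. Qed.

Lemma q0_head (j : int) : q0 j = wsum0 (- j) / w0norm - wsum1 (- j) / w1norm.
Proof.
rewrite q0E !(@isum_rev _ (1 - n%:Z)) opprB.
congr (_ / _ - _ / _); apply: eq_isum => i; rewrite -wtN; congr wt; ring.
Qed.

Lemma q1E (j : int) : q1 j = q0 (- j).
Proof.
rewrite /Defs.q1 /Defs.q0 isum_rev opprB; apply: eq_isum => i.
rewrite /a0 /a1 -[wt (2 * i)]wtN -[wt (2 * i - 1)]wtN.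
by congr (wt _ / _ - wt _ / _); ring.
Qed.

Hypothesis n_gt1 : (1 < n)%N.
Hypothesis phi0 : phi 0 = 1.

Lemma wt0 : wt 0 = 1.
Proof. by rewrite /Defs.wt mul0r phi0. Qed.

Lemma isum_wt_even_head (j : int) : - n%:Z <= j <= n%:Z - 1 ->
  isum (1 - n%:Z) j (fun l => wt (2 * l)) = w0norm - wsum0 (j + 1).
Proof.
move=> rng_j.
suff total : isum (1 - n%:Z) (n%:Z - 1) (fun l => wt (2 * l)) = w0norm.
  by rewrite -total (@isum_cat _ (1 - n%:Z) j (n%:Z - 1)) ?addrK //; lia.
rewrite (@isum_cat _ _ (-1)); [|lia|lia].
rewrite (@isum_cat _ (-1 + 1) 0); [|lia|lia].
rewrite (_ : -1 + 1 = 0) // add0r isum1 mulr0 wt0.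
rewrite (@isum_rev _ (1 - n%:Z)) opprK opprB.
under eq_isum => i do rewrite mulrN wtN.
by rewrite /Defs.w0norm; ring.
Qed.

Lemma wsum1_shift (j : int) :
  isum (j + 1) n%:Z (fun l => wt (2 * l - 1)) = wsum1 j.
Proof. by rewrite -[n%:Z](subrK 1) isum_shift; apply: eq_isum => i; congr wt; ring. Qed.

Lemma isum_wt_odd_head (j : int) : - n%:Z <= j <= n%:Z - 1 ->
  isum (1 - n%:Z) j (fun l => wt (2 * l - 1)) = w1norm - wsum1 j.
Proof.
move=> rng_j.
suff total : isum (1 - n%:Z) n%:Z (fun l => wt (2 * l - 1)) = w1norm.
  by rewrite -total (@isum_cat _ (1 - n%:Z) j n%:Z) ?wsum1_shift ?addrK //; lia.
rewrite (@isum_cat _ _ 0 n%:Z) ?wsum1_shift; [|lia|lia].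
rewrite (@isum_rev _ (1 - n%:Z)) oppr0 opprB.
rewrite (@eq_isum _ _ _ _ (fun l => wt (2 * l + 1))) => [|i]; last first.
  by rewrite -wtN; congr wt; ring.
by rewrite /Defs.w1norm /wsum1; ring.
Qed.

Hypothesis wt_pos : forall m : int, (absz m <= 2 * n - 1)%N -> 0 < wt m.

Lemma wsum0_gt0 (c : int) : 0 <= c <= n%:Z - 1 -> 0 < wsum0 c.
Proof. by move=> rng_c; apply: isum_gt0 => [|i rng_i]; [lia | apply: wt_pos; lia]. Qed.

Lemma wsum1_gt0 (c : int) : 0 <= c <= n%:Z - 1 -> 0 < wsum1 c.
Proof. by move=> rng_c; apply: isum_gt0 => [|i rng_i]; [lia | apply: wt_pos; lia]. Qed.

Lemma w0norm_gt0 : 0 < w0norm.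
Proof. by have := @wsum0_gt0 1 ltac:(lia); rewrite /Defs.w0norm -/(wsum0 1); lra. Qed.

Lemma w1norm_gt0 : 0 < w1norm.
Proof. by have := @wsum1_gt0 0 ltac:(lia); rewrite /Defs.w1norm -/(wsum1 0); lra. Qed.

Lemma q0_tail (j : int) : - n%:Z <= j <= n%:Z - 1 ->
  q0 j = wsum1 j / w1norm - wsum0 (j + 1) / w0norm.
Proof.
move=> rng_j; rewrite q0E isum_wt_even_head // isum_wt_odd_head // !mulrBl.
by rewrite !divff ?gt_eqF ?w0norm_gt0 ?w1norm_gt0 //; ring.
Qed.

Lemma norms_ratio_lt : w1norm / w0norm < wsum1 0 / wsum0 1.
Proof.
have O_gt0 := @wsum1_gt0 0 ltac:(lia); have E_gt0 := @wsum0_gt0 1 ltac:(lia).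
rewrite ltr_pdivrMr ?w0norm_gt0 // mulrAC ltr_pdivlMr //.
by rewrite /Defs.w1norm /Defs.w0norm -/(wsum1 0) -/(wsum0 1); nra.
Qed.

Hypothesis ratio_head : forall j0 : int, 1 <= j0 <= n%:Z - 1 ->
  wsum1 j0 / wsum0 j0 < w1norm / w0norm.
Hypothesis ratio_mid : forall j1 : int, 1 <= j1 <= n%:Z - 2 ->
  w1norm / w0norm < wsum1 j1 / wsum0 (j1 + 1).

Lemma q0_gt0 (j : int) : 1 - n%:Z <= j <= n%:Z - 1 -> 0 < q0 j.
Proof.
move=> rng_j; have [j_lt0 | j_ge0] := ltrP j 0.
  rewrite q0_head; apply: subr_div_gt0; rewrite ?w0norm_gt0 ?w1norm_gt0 //.
    by apply: wsum0_gt0; lia.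
  by apply: ratio_head; lia.
rewrite q0_tail; last by lia.
have [-> | j_ne_last] := eqVneq j (n%:Z - 1).
  rewrite /wsum0 isum_empty; last by lia.
  by rewrite mul0r subr0 divr_gt0 ?w1norm_gt0 // wsum1_gt0 //; lia.
apply: subr_div_gt0_inv; rewrite ?w0norm_gt0 ?w1norm_gt0 //.
  by apply: wsum0_gt0; lia.
have [-> | j_ne0] := eqVneq j 0; first by rewrite add0r norms_ratio_lt.
by apply: ratio_mid; lia.
Qed.

End Masks.

Theorem lemma4p3 (R : realFieldType) (phi : R -> R) (n : nat) (lambda : R) :
  (2 <= n)%N ->
  (2 * n%:R - 1 < lambda) -> (lambda < 2 * n%:R) ->
  phi 0 = 1 ->
  (forall x, 0 <= x <= 1 -> 0 < phi x <= 1) ->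
  (forall x y, 0 <= x -> x <= y -> y <= 1 -> phi y <= phi x) ->
  (forall j0 : int, 1 <= j0 <= n%:Z - 1 ->
     isum j0 (n%:Z - 1) (fun l => wt phi lambda (2 * l + 1))
       / isum j0 (n%:Z - 1) (fun l => wt phi lambda (2 * l))
     < w1norm phi lambda n / w0norm phi lambda n) ->
  (forall j1 : int, 1 <= j1 <= n%:Z - 2 ->
     w1norm phi lambda n / w0norm phi lambda n
     < isum j1 (n%:Z - 1) (fun l => wt phi lambda (2 * l + 1))
       / isum (j1 + 1) (n%:Z - 1) (fun l => wt phi lambda (2 * l))) ->
  forall j : int, 1 - n%:Z <= j <= n%:Z - 1 ->
    0 < q0 phi lambda n j /\ 0 < q1 phi lambda n j.
Proof.
move=> n_gt1 lt_lambda _ phi0 phi_range _ ratio_head ratio_mid j rng_j.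
have wt_pos (m : int) : (absz m <= 2 * n - 1)%N -> 0 < wt phi lambda m.
  by apply: wt_gt0 (ltnW n_gt1) lt_lambda => x /phi_range/andP[].
by rewrite q1E; split; apply: q0_gt0 => //; lia.
Qed.
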